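(* If $T$ is a strongly connected tournament with more than one vertex, then $\overrightarrow{hn}_{P_3^*}(T)=\overrightarrow{hn}_{g}(T)=2$.
   Context: A tournament is an orientation of a complete graph. It is strong (strongly connected) if for every ordered pair of distinct vertices $u,v$ there is a directed $(u,v)$-path. For an oriented graph $D$ consider two interval functions: the geodetic one $I_g(u,v)$ = set of vertices on some shortest directed $(u,v)$-path or some shortest directed $(v,u)$-path; and the distance-two one $I_{P_3^*}(u,v)$ = $\{u,v\}$ together with all vertices $w$ such that $(u,w),(w,v)\in A(D)$ and $(u,v)\notin A(D)$, or $(v,w),(w,u)\in A(D)$ and $(v,u)\notin A(D)$ (i.e. vertices on a shortest directed path of length exactly two between them in either direction). For an interval function $I$ and $S\subseteq V(D)$, $I(S)=\bigcup_{u,v\in S}I(u,v)$; $C$ is convex if $I(C)=C$; the convex hull of $S$ is the smallest convex set containing $S$; a hull set is a set with convex hull $V(D)$; the hull number ($\overrightarrow{hn}_g$, resp. $\overrightarrow{hn}_{P_3^*}$) is the minimum size of a hull set for the respective interval function. *)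

From mathcomp Require Import all_boot.
Set Implicit Arguments. Unset Strict Implicit. Unset Printing Implicit Defensive.

Section Digraph.
Variables (T : finType) (a : rel T).

Definition oriented : Prop := forall u v, a u v -> ~~ a v u.
Definition tournament : Prop :=
  (forall u, ~~ a u u) /\ oriented /\ (forall u v, u != v -> a u v || a v u).
Definition strong : Prop := forall u v, connect a u v.

(* a directed (u,v)-walk: the vertex sequence u :: p *)
Definition dwalk (u : T) (p : seq T) (v : T) : bool := path a u p && (last u p == v).
(* a shortest directed (u,v)-path (length = size p) *)
Definition shortest_dpath (u : T) (p : seq T) (v : T) : Prop :=
  dwalk u p v /\ forall q, dwalk u q v -> size p <= size q.

(* interval functions, as predicates I u v w  <->  w \in I(u,v) *)
Definition I_g (u v w : T) : Prop :=
  (exists p, shortest_dpath u p v /\ w \in u :: p) \/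
  (exists p, shortest_dpath v p u /\ w \in v :: p).

Definition I_P3 (u v w : T) : Prop :=
  w = u \/ w = v \/
  (a u w /\ a w v /\ ~~ a u v) \/ (a v w /\ a w u /\ ~~ a v u).

Definition interval := T -> T -> T -> Prop.

(* C is convex: I(C) = C, i.e. I(C) \subset C (C \subset I(C) holds as u \in I(u,u)) *)
Definition convex (I : interval) (C : {set T}) : Prop :=
  forall u v w, u \in C -> v \in C -> I u v w -> w \in C.

Definition in_convex_hull (I : interval) (S : {set T}) (x : T) : Prop :=
  forall C : {set T}, convex I C -> S \subset C -> x \in C.

Definition hull_set (I : interval) (S : {set T}) : Prop :=
  forall x, in_convex_hull I S x.

Definition hull_number_is (I : interval) (n : nat) : Prop :=
  (exists S : {set T}, hull_set I S /\ #|S| = n) /\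
  (forall S : {set T}, hull_set I S -> n <= #|S|).

End Digraph.

From mathcomp Require Import all_boot.
Set Implicit Arguments. Unset Strict Implicit. Unset Printing Implicit Defensive.

(* Among the arcs uv lying on a 3-cycle uvc, take one whose P3-hull H is
   largest.  H contains c, and the 3-cycle forces every vertex outside H to
   dominate H or to be dominated by H (otherwise it would lie on a 2-path
   between two vertices of H).  If H were not everything, strong connectivity
   would give an arc bd from a vertex dominated by H to a vertex dominating H;
   then bdu is a 3-cycle and every x in H lies on the 2-path d -> x -> b, so
   the hull of {b, d} strictly contains H.  Hence {u, v} is a P3-hull set, and
   also a geodetic one because 2-paths are shortest paths.  No smaller set
   works, since a set of at most one vertex is convex for both interval
   functions. *)

Section Hull.
Variables (T : finType) (Ib : T -> T -> T -> bool).
Implicit Types S C : {set T}.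

Definition convexb C : bool :=
  [forall u in C, forall v in C, forall w, Ib u v w ==> (w \in C)].

Definition hull S : {set T} := \bigcap_(C | convexb C && (S \subset C)) C.

Lemma convexbP C :
  reflect (forall u v w, u \in C -> v \in C -> Ib u v w -> w \in C) (convexb C).
Proof.
apply: (iffP forall_inP) => [cC u v w uC vC | cC u uC].
  by move/forall_inP/(_ v vC)/forallP/(_ w)/implyP: (cC u uC); apply.
by apply/forall_inP=> v vC; apply/forallP=> w; apply/implyP; apply: cC.
Qed.

Lemma subset_hull S : S \subset hull S.
Proof. by apply/bigcapsP=> C /andP[]. Qed.

Lemma mem_hull S x : x \in S -> x \in hull S.
Proof. exact/subsetP/subset_hull. Qed.

Lemma hull_min S C : convexb C -> S \subset C -> hull S \subset C.
Proof. by move=> cC sSC; apply: bigcap_inf; rewrite cC. Qed.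

Lemma convexb_hull S : convexb (hull S).
Proof.
apply/convexbP=> u v w /bigcapP uH /bigcapP vH Iuvw; apply/bigcapP=> C PC.
by move: (PC) => /andP[/convexbP cC _]; apply: cC (uH C PC) (vH C PC) Iuvw.
Qed.

Lemma hull_closed S u v w :
  u \in hull S -> v \in hull S -> Ib u v w -> w \in hull S.
Proof. exact/convexbP/convexb_hull. Qed.

Lemma hull_ind S (P : pred T) :
  convexb [set x in hull S | P x] -> {subset S <= P} -> {subset hull S <= P}.
Proof.
move=> cP SP x xH; have sSP : S \subset [set y in hull S | P y].
  by apply/subsetP=> y yS; rewrite inE mem_hull //; apply: SP.
by move: (subsetP (hull_min cP sSP) x xH); rewrite inE => /andP[].
Qed.

Lemma hull_set_hullT (I : interval T) S :
  (forall u v w, reflect (I u v w) (Ib u v w)) -> hull S = setT -> hull_set I S.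
Proof.
move=> IbP hullT x C cC sSC; have cbC : convexb C.
  by apply/convexbP=> u v w uC vC /IbP; apply: cC.
by apply: (subsetP (hull_min cbC sSC)); rewrite hullT inE.
Qed.

End Hull.

Section HullNumberTwo.
Variables (T : finType) (I : interval T).
Implicit Types S : {set T}.
Hypothesis I_xx : forall x w, I x x w -> w = x.

Lemma hull_set_card_gt1 S : 1 < #|T| -> hull_set I S -> 1 < #|S|.
Proof.
move=> T_gt1 hS; rewrite ltnNge; apply: contraTN T_gt1 => S_le1.
have cS : convex I S.
  by move=> u v w uS vS; rewrite (card_le1_eqP S_le1 u v) // => /I_xx ->.
have ST : S = setT by apply/setP=> x; rewrite inE; apply: hS cS (subxx S).
by rewrite -cardsT -ST ltnNge S_le1.
Qed.

Lemma hull_number_two S :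
  1 < #|T| -> hull_set I S -> #|S| = 2 -> hull_number_is I 2.
Proof.
by move=> T_gt1 hS S2; split=> [|S' /hull_set_card_gt1]; [exists S | apply].
Qed.

End HullNumberTwo.

Lemma connect_exit (T : finType) (e : rel T) (X : {set T}) x y :
  connect e x y -> x \in X -> y \notin X ->
  exists x' y', [/\ x' \in X, y' \notin X & e x' y'].
Proof.
case/connectP=> p; elim: p x => [|z p IH] x /= => [_ -> -> // | /andP[exz pz] ey xX yX].
by case: (boolP (z \in X)) => zX; [apply: IH pz ey zX yX | exists x, z].
Qed.

Section Intervals.
Variables (T : finType) (a : rel T).
Implicit Types (S : {set T}) (u v w x : T).

Definition ip3 u v w : bool :=
  [|| w == u, w == v, a u w && a w v && ~~ a u v | a v w && a w u && ~~ a v u].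

Lemma ip3P u v w : reflect (I_P3 a u v w) (ip3 u v w).
Proof.
apply: (iffP or4P) => [[/eqP|/eqP|/andP[/andP[]]|/andP[/andP[]]] | ].
- by left.
- by right; left.
- by right; right; left.
- by right; right; right.
by case=> [->|[->|[[-> [-> ->]]|[-> [-> ->]]]]]; rewrite ?eqxx; constructor.
Qed.

Lemma I_g_xx x w : I_g a x x w -> w = x.
Proof.
have nil_dwalk : dwalk a x [::] x by rewrite /dwalk /= eqxx.
by case=> -[[|y p] [[_ /(_ _ nil_dwalk)]]] //=; rewrite inE => _ /eqP.
Qed.

Hypothesis ori : oriented a.

Lemma I_P3_xx x w : I_P3 a x x w -> w = x.
Proof.
by case=> [|[|[[axw [awx _]]|[axw [awx _]]]]] //; move: (ori axw); rewrite awx.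
Qed.

Lemma shortest_dpath2 u v w :
  a u w -> a w v -> ~~ a u v -> shortest_dpath a u [:: w; v] v.
Proof.
move=> auw awv nauv; split=> [|[|t [|t' q]] //]; rewrite /dwalk /= ?auw ?awv ?eqxx //.
  by move/eqP=> uv; move: (ori auw); rewrite uv awv.
by rewrite andbT => /andP[aut /eqP tv]; move: nauv; rewrite -tv aut.
Qed.

Lemma hull_set_I_g_of_I_P3 S : hull_set (I_P3 a) S -> hull_set (I_g a) S.
Proof.
move=> hS x C cC; apply: hS => u v w uC vC.
case=> [->|[->|[[auw [awv nauv]]|[avw [awu navu]]]]] //; apply: (cC u v) => //.
  by left; exists [:: w; v]; split; [exact: shortest_dpath2 | rewrite !inE eqxx orbT].
by right; exists [:: w; u]; split; [exact: shortest_dpath2 | rewrite !inE eqxx orbT].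
Qed.

End Intervals.

Section TournamentHull.
Variables (T : finType) (a : rel T).
Hypothesis tour : tournament a.
Implicit Types (C : {set T}) (u v w x y : T).

Let irr x : ~~ a x x := tour.1 x.
Let ori : oriented a := tour.2.1.
Let total x y : x != y -> a x y || a y x := tour.2.2 x y.

Local Notation convexP3 := (convexb (ip3 a)).
Local Notation hull2 u v := (hull (ip3 a) [set u; v]).

Definition cycle3 u v w := [&& a u v, a v w & a w u].

Lemma arc_from_outside C w x y :
  convexP3 C -> w \notin C -> x \in C -> y \in C -> a x y -> a w x -> a w y.
Proof.
move=> /convexbP cC wC xC yC axy awx; have /total/orP[ayw|//] : y != w.
  by apply: contraNneq wC => <-.
by move: wC; rewrite (cC x y) // /ip3 ayw awx (ori axy) !orbT.
Qed.

Lemma arc_to_outside C w x y :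
  convexP3 C -> w \notin C -> x \in C -> y \in C -> a x y -> a y w -> a x w.
Proof.
move=> /convexbP cC wC xC yC axy ayw; have /total/orP[//|awx] : x != w.
  by apply: contraNneq wC => <-.
by move: wC; rewrite (cC x y) // /ip3 ayw awx (ori axy) !orbT.
Qed.

Lemma convexP3_out_nbhd C w :
  convexP3 C -> w \notin C -> convexP3 [set x in C | a w x].
Proof.
move=> cC wC; apply/convexbP=> x y z; rewrite !inE => /andP[xC awx] /andP[yC awy] Ixyz.
have zC : z \in C by apply: (convexbP _ _ cC) Ixyz.
rewrite zC; case/or4P: Ixyz => [/eqP-> | /eqP-> | | ] //.
  by case/andP=> /andP[axz _] _; apply: arc_from_outside cC wC xC zC axz awx.
by case/andP=> /andP[ayz _] _; apply: arc_from_outside cC wC yC zC ayz awy.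
Qed.

Lemma convexP3_in_nbhd C w :
  convexP3 C -> w \notin C -> convexP3 [set x in C | a x w].
Proof.
move=> cC wC; apply/convexbP=> x y z; rewrite !inE => /andP[xC axw] /andP[yC ayw] Ixyz.
have zC : z \in C by apply: (convexbP _ _ cC) Ixyz.
rewrite zC; case/or4P: Ixyz => [/eqP-> | /eqP-> | | ] //.
  by case/andP=> /andP[_ azy] _; apply: arc_to_outside cC wC zC yC azy ayw.
by case/andP=> /andP[_ azx] _; apply: arc_to_outside cC wC zC xC azx axw.
Qed.

Lemma hull2_cycle3_dichotomy u v c w : cycle3 u v c -> w \notin hull2 u v ->
  {in hull2 u v, forall x, a w x} \/ {in hull2 u v, forall x, a x w}.
Proof.
case/and3P=> auv avc acu wC; have cC := convexb_hull (ip3 a) [set u; v].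
have uC : u \in hull2 u v by rewrite mem_hull ?set21.
have vC : v \in hull2 u v by rewrite mem_hull ?set22.
have cinC : c \in hull2 u v.
  by apply: hull_closed uC vC _; rewrite /ip3 avc acu (ori auv) !orbT.
have hull2_ind (P : pred T) : convexP3 [set x in hull2 u v | P x] -> P u -> P v ->
    {in hull2 u v, forall x, P x}.
  by move=> cP Pu Pv; apply: hull_ind cP _ => x /set2P[]->.
have /total/orP[auw|awu] : u != w by apply: contraNneq wC => <-.
  have acw := arc_to_outside cC wC cinC uC acu auw.
  have avw := arc_to_outside cC wC vC cinC avc acw.
  by right; apply: hull2_ind (convexP3_in_nbhd cC wC) auw avw.
have awv := arc_from_outside cC wC uC vC auv awu.
by left; apply: hull2_ind (convexP3_out_nbhd cC wC) awu awv.
Qed.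

Lemma hull2_proper C b d :
  {in C, forall x, a x b} -> {in C, forall x, a d x} -> a b d -> C \proper hull2 b d.
Proof.
move=> Cb dC abd; have bH : b \in hull2 b d by rewrite mem_hull ?set21.
have dH : d \in hull2 b d by rewrite mem_hull ?set22.
apply/properP; split; last by exists b => //; apply: contraNN (irr b) => /Cb.
apply/subsetP=> x xC; apply: hull_closed bH dH _.
by rewrite /ip3 (Cb x xC) (dC x xC) (ori abd) !orbT.
Qed.

Hypothesis str : strong a.

Lemma hull2_cycle3_grow u v c : cycle3 u v c -> hull2 u v != setT ->
  exists b d e, cycle3 b d e /\ #|hull2 u v| < #|hull2 b d|.
Proof.
move=> c3; rewrite -subTset => /subsetPn[w _ wC].
have uC : u \in hull2 u v by rewrite mem_hull ?set21.
set C := hull2 u v in wC uC *.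
pose A := [set z | [forall x in C, a z x]]; pose B := [set z | [forall x in C, a x z]].
suff [b [d [bB dA abd]]] : exists b d, [/\ b \in B, d \in A & a b d].
  move: bB dA; rewrite !inE => /forall_inP Cb /forall_inP dC.
  exists b, d, u; split; first by rewrite /cycle3 abd (dC u uC) (Cb u uC).
  exact/proper_card/hull2_proper.
have outside z : z \notin C -> (z \in A) || (z \in B).
  move=> zC; rewrite !inE; case: (hull2_cycle3_dichotomy c3 zC) => h.
  - by apply/orP; left; apply/forall_inP.
  - by apply/orP; right; apply/forall_inP.
have ori_out y z : a y z -> a z y = false by move/ori/negbTE.
have into_A y z : z \in A -> a y z -> y \notin C.
  by rewrite inE => /forall_inP zA ayz; apply: contraFN (ori_out _ _ ayz) => /zA.
have from_B y z : y \in B -> a y z -> z \notin C.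
  by rewrite inE => /forall_inP yB ayz; apply: contraFN (ori_out _ _ ayz) => /yB.
have uAB (X : {set T}) : X \subset A :|: B -> u \notin X.
  move/subsetP=> XAB; apply: contraNN (irr u) => /XAB.
  by rewrite !inE => /orP[]/forall_inP/(_ u uC).
case/orP: (outside w wC) => [wA | wB].
  have [b [d [bA dA abd]]] : exists b d, [/\ b \in ~: A, d \notin ~: A & a b d].
    by apply: connect_exit (str u w) _ _; rewrite in_setC ?negbK // uAB ?subsetUl.
  rewrite in_setC negbK in dA; rewrite in_setC in bA; exists b, d; split=> //.
  by move: (outside b (into_A _ _ dA abd)); rewrite (negbTE bA).
have [b [d [bB dB abd]]] := connect_exit (str w u) wB (uAB B (subsetUr A B)).
exists b, d; split=> //.
by move: (outside d (from_B _ _ bB abd)); rewrite (negbTE dB) orbF.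
Qed.

Lemma cycle3_of_path x s p : path a s p -> last s p = x -> a x s ->
  exists y z, cycle3 x y z.
Proof.
elim: p s => [|t p IH] s /= => [_ -> | /andP[ast pt] pt_x axs].
  by rewrite (negbTE (irr x)).
have [tx|ntx] := eqVneq t x; first by move: (ori axs); rewrite -tx ast.
case/orP: (total ntx) => [atx|axt]; last exact: IH pt pt_x axt.
by exists s, t; rewrite /cycle3 axs ast atx.
Qed.

Lemma exists_cycle3 : 1 < #|T| -> exists u v w, cycle3 u v w.
Proof.
case/card_gt1P=> x [y [_ _ /total xy]].
have [u [v auv]] : exists u v, a u v by case/orP: xy; [exists x, y | exists y, x].
have /connectP[p vp pu] := str v u.
by have [w [c c3]] := cycle3_of_path vp (esym pu) auv; exists u, w, c.
Qed.

Lemma exists_arc_hull2T : 1 < #|T| -> exists u v, a u v /\ hull2 u v = setT.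
Proof.
move=> T_gt1; have [u0 [v0 [c0 c3]]] := exists_cycle3 T_gt1.
pose P := [pred t : T * T * T | cycle3 t.1.1 t.1.2 t.2].
pose F (t : T * T * T) := #|hull2 t.1.1 t.1.2|.
case: (@arg_maxnP _ (u0, v0, c0) P F c3) => -[[u v] c] /= c3m F_max.
exists u, v; split; first by case/and3P: c3m.
apply/eqP; apply: contraT => /(hull2_cycle3_grow c3m)[b [d [e [c3' F_lt]]]].
by have := F_max (b, d, e) c3'; rewrite /F /= leqNgt F_lt.
Qed.

End TournamentHull.

Theorem proposition5 (T : finType) (a : rel T) :
  tournament a -> strong a -> 1 < #|T| ->
  hull_number_is (I_P3 a) 2 /\ hull_number_is (I_g a) 2.
Proof.
move=> tour str T_gt1.
have [u [v [auv hullT]]] := exists_arc_hull2T tour str T_gt1.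
have uv2 : #|[set u; v]| = 2.
  by rewrite cards2 (contraTneq _ auv) // => ->; apply: tour.1.
have hP3 : hull_set (I_P3 a) [set u; v] := hull_set_hullT (@ip3P _ a) hullT.
split; apply: (hull_number_two _ T_gt1 _ uv2).
- exact: I_P3_xx tour.2.1.
- exact: hP3.
- exact: I_g_xx.
- exact: (hull_set_I_g_of_I_P3 tour.2.1 hP3).
Qed.
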